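(* Let $\rho:\mathbb{R}^3\to\mathbb{R}_{\ge 0}$ be a differentiable probability density supported in the closed unit ball of $\mathbb{R}^3$, and let $B=\sup_{\mathbf{x}}|\nabla\rho(\mathbf{x})|$. Let $I_1,I_2$ be the tomographic projections of $\rho$ along unit vectors $\mathbf{u}$ and $\mathbf{v}$ respectively, and let $\measuredangle(\mathbf{u},\mathbf{v})\in[0,\pi]$ be the angle between them. Then $$L_2^R(I_1,I_2)\le 2\sqrt{\pi}\,B\,\measuredangle(\mathbf{u},\mathbf{v}).$$
   Context: For $R\in\mathrm{SO}(3)$ define $(R\rho)(\mathbf{x})=\rho(R^T\mathbf{x})$. The tomographic projection of $\rho$ along a unit vector $\mathbf{u}$ is the function on $\mathbb{R}^2$ given by $I(x,y)=\int_{\mathbb{R}}(R\rho)(x,y,z)\,dz$, where $R\in\mathrm{SO}(3)$ is any rotation with $R\mathbf{u}=(0,0,-1)$; different choices of $R$ change $I$ only by an in-plane rotation. For $g\in\mathrm{SO}(2)$ and a function $I$ on $\mathbb{R}^2$ let $(gI)(\mathbf{w})=I(g^T\mathbf{w})$. The rotationally-invariant Euclidean distance is $L_2^R(I_1,I_2)=\min_{g\in\mathrm{SO}(2)}\|I_1-gI_2\|_{L^2(\mathbb{R}^2)}$. *)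

From Stdlib Require Import Reals.
From Coquelicot Require Import Coquelicot.
Open Scope R_scope.

Record R3 := mkR3 { c1 : R; c2 : R; c3 : R }.
Definition dot3 (a b : R3) : R := c1 a * c1 b + c2 a * c2 b + c3 a * c3 b.
Definition norm3 (a : R3) : R := sqrt (dot3 a a).
Definition add3 (a b : R3) : R3 := mkR3 (c1 a + c1 b) (c2 a + c2 b) (c3 a + c3 b).

(* 3x3 real matrices, indices 0,1,2 ; entry i j *)
Definition mat3 := nat -> nat -> R.
Definition row3 (M : mat3) (i : nat) (p : R3) : R :=
  M i 0%nat * c1 p + M i 1%nat * c2 p + M i 2%nat * c3 p.
Definition mulv3 (M : mat3) (p : R3) : R3 := mkR3 (row3 M 0 p) (row3 M 1 p) (row3 M 2 p).
Definition tr3 (M : mat3) : mat3 := fun i j => M j i.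
Definition det3 (M : mat3) : R :=
  M 0%nat 0%nat * (M 1%nat 1%nat * M 2%nat 2%nat - M 1%nat 2%nat * M 2%nat 1%nat)
  - M 0%nat 1%nat * (M 1%nat 0%nat * M 2%nat 2%nat - M 1%nat 2%nat * M 2%nat 0%nat)
  + M 0%nat 2%nat * (M 1%nat 0%nat * M 2%nat 1%nat - M 1%nat 1%nat * M 2%nat 0%nat).
Definition SO3 (M : mat3) : Prop :=
  (forall i j, (i < 3)%nat -> (j < 3)%nat ->
     M 0%nat i * M 0%nat j + M 1%nat i * M 1%nat j + M 2%nat i * M 2%nat j
     = if Nat.eqb i j then 1 else 0) /\ det3 M = 1.

Definition mat2 := nat -> nat -> R.
Definition SO2 (g : mat2) : Prop :=
  (forall i j, (i < 2)%nat -> (j < 2)%nat ->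
     g 0%nat i * g 0%nat j + g 1%nat i * g 1%nat j = if Nat.eqb i j then 1 else 0)
  /\ g 0%nat 0%nat * g 1%nat 1%nat - g 0%nat 1%nat * g 1%nat 0%nat = 1.
Definition act2 (g : mat2) (I : R -> R -> R) : R -> R -> R :=
  fun x y => I (g 0%nat 0%nat * x + g 1%nat 0%nat * y) (g 0%nat 1%nat * x + g 1%nat 1%nat * y).

Definition int_R (f : R -> R) : R := RInt_gen f (Rbar_locally m_infty) (Rbar_locally p_infty).

Definition L2norm2 (f : R -> R -> R) : R :=
  sqrt (int_R (fun x => int_R (fun y => (f x y) ^ 2))).

(* rotationally invariant distance: min over SO(2), written as the infimum *)
Definition L2R (I1 I2 : R -> R -> R) : Rbar :=
  Glb_Rbar (fun r => exists g, SO2 g /\ r = L2norm2 (fun x y => I1 x y - act2 g I2 x y)).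

Definition rotate3 (M : mat3) (rho : R3 -> R) : R3 -> R := fun p => rho (mulv3 (tr3 M) p).
Definition projection (M : mat3) (rho : R3 -> R) : R -> R -> R :=
  fun x y => int_R (fun z => rotate3 M rho (mkR3 x y z)).

Definition has_gradient (rho : R3 -> R) (p g : R3) : Prop :=
  forall eps, 0 < eps -> exists delta, 0 < delta /\
    forall h, norm3 h < delta ->
      Rabs (rho (add3 p h) - rho p - dot3 g h) <= eps * norm3 h.

Definition prob_density (rho : R3 -> R) : Prop :=
  (forall p, 0 <= rho p) /\
  int_R (fun x => int_R (fun y => int_R (fun z => rho (mkR3 x y z)))) = 1.

Definition e3neg : R3 := mkR3 0 0 (-1).
Definition angle3 (u v : R3) : R := acos (dot3 u v).

From Stdlib Require Import Reals Lra Lia Nsatz IndefiniteDescription FunctionalExtensionality.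
From Coquelicot Require Import Coquelicot.
Open Scope R_scope.

(* Let [Q] be the rotation by the angle [t] between [u] and [v] that takes the pole [e3p] to
   [M1 (-v)]. Then [T = Q^T M1 M2^T] fixes [e3p], so it acts as an in-plane rotation [g], and
   [g I2] is the projection of [h o Q] where [h = rho o M1^T] is the density whose projection
   is [I1]. By the mean value theorem [h] is [B]-Lipschitz, and [|p - Q p| <= t |p|], so
   [h - h o Q] is bounded by [B t] on the unit ball and vanishes outside it. Its projection is
   then bounded by [B t] times the length [2 sqrt (1 - x^2 - y^2)] of the chord over [(x, y)];
   integrating over the square with [1 - x^2 - y^2 <= (1 - x^2) (1 - y^2)] gives
   [|I1 - g I2|^2 <= 64/9 (B t)^2 <= 4 PI (B t)^2]. *)

Definition sub3 (a b : R3) : R3 := mkR3 (c1 a - c1 b) (c2 a - c2 b) (c3 a - c3 b).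
Definition scal3 (t : R) (a : R3) : R3 := mkR3 (t * c1 a) (t * c2 a) (t * c3 a).
Definition e3p : R3 := mkR3 0 0 1.

Lemma dot3_self_ge0 a : 0 <= dot3 a a.
Proof.
destruct a as [x y z]; unfold dot3; simpl.
pose proof (Rle_0_sqr x); pose proof (Rle_0_sqr y); pose proof (Rle_0_sqr z).
unfold Rsqr in *; lra.
Qed.

Lemma dot3_scal a t b : dot3 a (scal3 t b) = t * dot3 a b.
Proof. destruct a, b; unfold dot3, scal3; simpl; ring. Qed.

Lemma norm3_scal t a : norm3 (scal3 t a) = Rabs t * norm3 a.
Proof.
unfold norm3. rewrite <- sqrt_Rsqr_abs, <- sqrt_mult by (apply Rle_0_sqr || apply dot3_self_ge0).
f_equal. destruct a; unfold dot3, scal3, Rsqr; simpl; ring.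
Qed.

Lemma norm3_sub_sym a b : norm3 (sub3 a b) = norm3 (sub3 b a).
Proof. unfold norm3; f_equal; destruct a, b; unfold dot3, sub3; simpl; ring. Qed.

Lemma abs_dot3_le a b : Rabs (dot3 a b) <= norm3 a * norm3 b.
Proof.
unfold norm3. rewrite <- sqrt_mult, <- sqrt_Rsqr_abs by apply dot3_self_ge0.
apply sqrt_le_1_alt. unfold Rsqr.
destruct a as [a1 a2 a3], b as [b1 b2 b3]; unfold dot3; simpl.
(* Lagrange's identity *)
assert (E : (a1*a1 + a2*a2 + a3*a3) * (b1*b1 + b2*b2 + b3*b3)
  - (a1*b1 + a2*b2 + a3*b3) * (a1*b1 + a2*b2 + a3*b3)
  = (a1*b2 - a2*b1)*(a1*b2 - a2*b1) + (a1*b3 - a3*b1)*(a1*b3 - a3*b1)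
    + (a2*b3 - a3*b2)*(a2*b3 - a3*b2)) by ring.
pose proof (Rle_0_sqr (a1*b2 - a2*b1)); pose proof (Rle_0_sqr (a1*b3 - a3*b1)).
pose proof (Rle_0_sqr (a2*b3 - a3*b2)); unfold Rsqr in *; lra.
Qed.

Lemma norm3_sub_x a b y z : norm3 (sub3 (mkR3 a y z) (mkR3 b y z)) = Rabs (a - b).
Proof. unfold norm3, dot3, sub3; simpl; rewrite <- sqrt_Rsqr_abs; f_equal; unfold Rsqr; ring. Qed.

Lemma norm3_sub_y a b x z : norm3 (sub3 (mkR3 x a z) (mkR3 x b z)) = Rabs (a - b).
Proof. unfold norm3, dot3, sub3; simpl; rewrite <- sqrt_Rsqr_abs; f_equal; unfold Rsqr; ring. Qed.

Lemma norm3_sub_z a b x y : norm3 (sub3 (mkR3 x y a) (mkR3 x y b)) = Rabs (a - b).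
Proof. unfold norm3, dot3, sub3; simpl; rewrite <- sqrt_Rsqr_abs; f_equal; unfold Rsqr; ring. Qed.

Lemma norm3_gt1 x y z : 1 < x*x + y*y + z*z -> 1 < norm3 (mkR3 x y z).
Proof. intros H. unfold norm3, dot3; simpl. rewrite <- sqrt_1. apply sqrt_lt_1_alt. lra. Qed.

Lemma sqr_le_1 x : Rabs x <= 1 -> x * x <= 1.
Proof.
intros Hx. assert (H : x² <= 1²) by (apply Rsqr_le_abs_1; now rewrite Rabs_R1).
unfold Rsqr in H; lra.
Qed.

Lemma sqr_gt_1 x : 1 < Rabs x -> 1 < x * x.
Proof.
intros Hx. assert (H : 1² < x²) by (apply Rsqr_lt_abs_1; now rewrite Rabs_R1).
unfold Rsqr in H; lra.
Qed.

Lemma sqrt_le_mult X c Y : X <= c * c * Y -> 0 <= c -> 0 <= Y -> sqrt X <= c * sqrt Y.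
Proof.
intros H Hc HY. apply Rle_trans with (sqrt (c * c * Y)); [now apply sqrt_le_1_alt|].
rewrite sqrt_mult, sqrt_square by nra. lra.
Qed.

(** * Rotations *)

Definition mul3 (A B : mat3) : mat3 := fun i j =>
  A i 0%nat * B 0%nat j + A i 1%nat * B 1%nat j + A i 2%nat * B 2%nat j.

Definition orthogonal3 (M : mat3) : Prop :=
  forall p q, dot3 (mulv3 M p) (mulv3 M q) = dot3 p q.

Lemma mulv3_mul A B p : mulv3 (mul3 A B) p = mulv3 A (mulv3 B p).
Proof. destruct p; unfold mulv3, row3, mul3; simpl; f_equal; ring. Qed.

Lemma mulv3_sub M p q : mulv3 M (sub3 p q) = sub3 (mulv3 M p) (mulv3 M q).
Proof. destruct p, q; unfold mulv3, row3, sub3; simpl; f_equal; ring. Qed.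

Lemma det3_mul A B : det3 (mul3 A B) = det3 A * det3 B.
Proof. unfold det3, mul3; ring. Qed.

Lemma det3_tr M : det3 (tr3 M) = det3 M.
Proof. unfold det3, tr3; ring. Qed.

Lemma norm3_orthogonal M p : orthogonal3 M -> norm3 (mulv3 M p) = norm3 p.
Proof. intros HM. unfold norm3. now rewrite HM. Qed.

Lemma orthogonal3_mul A B : orthogonal3 A -> orthogonal3 B -> orthogonal3 (mul3 A B).
Proof. intros HA HB p q. now rewrite !mulv3_mul, HA, HB. Qed.

Lemma SO3_columns M : SO3 M ->
  let a := M 0%nat 0%nat in let b := M 0%nat 1%nat in let c := M 0%nat 2%nat in
  let d := M 1%nat 0%nat in let e := M 1%nat 1%nat in let f := M 1%nat 2%nat in
  let g := M 2%nat 0%nat in let h := M 2%nat 1%nat in let i := M 2%nat 2%nat in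
  a*a + d*d + g*g = 1 /\ a*b + d*e + g*h = 0 /\ a*c + d*f + g*i = 0 /\
  b*b + e*e + h*h = 1 /\ b*c + e*f + h*i = 0 /\ c*c + f*f + i*i = 1 /\
  a*(e*i - f*h) - b*(d*i - f*g) + c*(d*h - e*g) = 1.
Proof.
intros [H Hdet]. simpl.
repeat split; [apply (H 0 0)%nat | apply (H 0 1)%nat | apply (H 0 2)%nat | apply (H 1 1)%nat
  | apply (H 1 2)%nat | apply (H 2 2)%nat | exact Hdet]; lia.
Qed.

Lemma SO3_trK M p : SO3 M -> mulv3 (tr3 M) (mulv3 M p) = p.
Proof.
intros HM. destruct (SO3_columns M HM) as (H1 & H2 & H3 & H4 & H5 & H6 & _).
destruct p as [x y z]; unfold mulv3, row3, tr3; simpl; f_equal; nsatz.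
Qed.

Lemma SO3_orthogonal M : SO3 M -> orthogonal3 M.
Proof.
intros HM. destruct (SO3_columns M HM) as (H1 & H2 & H3 & H4 & H5 & H6 & _).
intros [x y z] [x' y' z']; unfold dot3, mulv3, row3; simpl; nsatz.
Qed.

Lemma SO3_orthogonal_tr M : SO3 M -> orthogonal3 (tr3 M).
Proof.
intros HM. destruct (SO3_columns M HM) as (H1 & H2 & H3 & H4 & H5 & H6 & H7).
assert (Rows : forall a b c d e f g h i : R,
  a*a + d*d + g*g = 1 -> a*b + d*e + g*h = 0 -> a*c + d*f + g*i = 0 ->
  b*b + e*e + h*h = 1 -> b*c + e*f + h*i = 0 -> c*c + f*f + i*i = 1 ->
  a*(e*i - f*h) - b*(d*i - f*g) + c*(d*h - e*g) = 1 ->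
  a*a + b*b + c*c = 1 /\ a*d + b*e + c*f = 0 /\ a*g + b*h + c*i = 0 /\
  d*d + e*e + f*f = 1 /\ d*g + e*h + f*i = 0 /\ g*g + h*h + i*i = 1).
{ intros; repeat split; nsatz. }
destruct (Rows _ _ _ _ _ _ _ _ _ H1 H2 H3 H4 H5 H6 H7) as (R1 & R2 & R3 & R4 & R5 & R6).
intros [x y z] [x' y' z']; unfold dot3, mulv3, row3, tr3; simpl; nsatz.
Qed.

Lemma orthogonal3_SO3 M : orthogonal3 M -> det3 M = 1 -> SO3 M.
Proof.
intros HM Hdet. split; [|exact Hdet].
intros i j Hi Hj.
pose proof (HM (mkR3 1 0 0) (mkR3 1 0 0)) as E00.
pose proof (HM (mkR3 1 0 0) (mkR3 0 1 0)) as E01.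
pose proof (HM (mkR3 1 0 0) (mkR3 0 0 1)) as E02.
pose proof (HM (mkR3 0 1 0) (mkR3 0 1 0)) as E11.
pose proof (HM (mkR3 0 1 0) (mkR3 0 0 1)) as E12.
pose proof (HM (mkR3 0 0 1) (mkR3 0 0 1)) as E22.
unfold dot3, mulv3, row3 in *; simpl in *.
destruct i as [|[|[|i]]]; [| | |lia]; destruct j as [|[|[|j]]]; try lia; simpl; nra.
Qed.

Lemma SO3_tr M : SO3 M -> SO3 (tr3 M).
Proof.
intros HM. apply orthogonal3_SO3; [now apply SO3_orthogonal_tr|].
rewrite det3_tr. apply HM.
Qed.

Lemma SO3_mul A B : SO3 A -> SO3 B -> SO3 (mul3 A B).
Proof.
intros HA HB. apply orthogonal3_SO3.
- apply orthogonal3_mul; now apply SO3_orthogonal.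
- rewrite det3_mul, (proj2 HA), (proj2 HB). ring.
Qed.

Lemma SO3_fix_e3p_entries T : SO3 T -> mulv3 T e3p = e3p ->
  T 0%nat 2%nat = 0 /\ T 1%nat 2%nat = 0 /\ T 2%nat 2%nat = 1 /\
  T 2%nat 0%nat = 0 /\ T 2%nat 1%nat = 0.
Proof.
intros HT HTe. destruct (SO3_columns T HT) as (_ & _ & H3 & _ & H5 & _). simpl in H3, H5.
unfold mulv3, row3, e3p in HTe; simpl in HTe. injection HTe as E0 E1 E2.
rewrite Rmult_0_r, Rmult_0_r, Rmult_1_r, !Rplus_0_l in E0, E1, E2.
rewrite E0, E1, E2 in *. repeat split; lra.
Qed.

Lemma SO3_fix_e3p_SO2 T : SO3 T -> mulv3 T e3p = e3p -> SO2 T.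
Proof.
intros HT HTe. destruct (SO3_fix_e3p_entries T HT HTe) as (E02 & E12 & E22 & E20 & E21).
destruct HT as [Hcol Hdet]. split.
- intros i j Hi Hj. rewrite <- (Hcol i j) by lia.
  destruct i as [|[|i]]; [| |lia]; destruct j as [|[|j]]; try lia; rewrite ?E20, ?E21; ring.
- unfold det3 in Hdet. rewrite E02, E12, E22, E20, E21 in Hdet. lra.
Qed.

Lemma one_minus_cos_le t : 0 <= t <= PI -> 2 * (1 - cos t) <= t * t.
Proof.
intros Ht. replace t with (2 * (t / 2)) at 1 by field. rewrite cos_2a_sin.
assert (0 <= sin (t / 2)) by (apply sin_ge_0; lra).
assert (sin (t / 2) <= t / 2).
{ destruct (Req_dec t 0) as [->|Ht0].
  - unfold Rdiv; rewrite Rmult_0_l, sin_0; lra.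
  - left; apply sin_lt_x; lra. }
nra.
Qed.

Definition flip1 : mat3 := fun i j =>
  match i, j with
  | 0%nat, 0%nat => 1 | 1%nat, 1%nat => -1 | 2%nat, 2%nat => -1 | _, _ => 0
  end.

(* Rodrigues' formula for the rotation about the axis [e3p x b] taking [e3p] to the unit
   vector [b]; at [b = e3neg] the factor [/ (1 + c3 b)] is a junk value. *)
Definition rodrigues (b : R3) : mat3 := fun i j =>
  let b1 := c1 b in let b2 := c2 b in let b3 := c3 b in let k := / (1 + b3) in
  match i, j with
  | 0%nat, 0%nat => 1 - b1*b1*k | 0%nat, 1%nat => - (b1*b2*k) | 0%nat, 2%nat => b1
  | 1%nat, 0%nat => - (b1*b2*k) | 1%nat, 1%nat => 1 - b2*b2*k | 1%nat, 2%nat => b2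
  | 2%nat, 0%nat => - b1 | 2%nat, 1%nat => - b2 | 2%nat, 2%nat => b3
  | _, _ => 0
  end.

Definition sqdist3 (p q : R3) : R := dot3 (sub3 p q) (sub3 p q).

Lemma flip1_spec :
  SO3 flip1 /\ mulv3 flip1 e3p = e3neg /\
  forall p, sqdist3 p (mulv3 flip1 p) <= 4 * dot3 p p.
Proof.
split; [split|split].
- intros i j Hi Hj.
  destruct i as [|[|[|i]]]; [| | |lia]; destruct j as [|[|[|j]]]; try lia;
    unfold flip1; simpl; ring.
- unfold det3, flip1; simpl; ring.
- unfold mulv3, row3, e3p, e3neg, flip1; simpl; f_equal; ring.
- intros [x y z]. unfold sqdist3, dot3, sub3, mulv3, row3, flip1; simpl. nra.
Qed.

Lemma rodrigues_spec b : dot3 b b = 1 -> c3 b <> -1 ->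
  SO3 (rodrigues b) /\ mulv3 (rodrigues b) e3p = b /\
  forall p, sqdist3 p (mulv3 (rodrigues b) p) <= 2 * (1 - c3 b) * dot3 p p.
Proof.
destruct b as [b1 b2 b3]; unfold dot3; simpl; intros Hb Hb3.
assert (Hb3' : -1 < b3).
{ assert (Hge : -1 <= b3).
  { pose proof (Rle_0_sqr b1); pose proof (Rle_0_sqr b2); unfold Rsqr in *; nra. }
  destruct Hge; [assumption | congruence]. }
assert (Hk : / (1 + b3) * (1 + b3) = 1) by (field; lra).
assert (Hkpos : 0 < / (1 + b3)) by (apply Rinv_0_lt_compat; lra).
unfold rodrigues; simpl. generalize dependent (/ (1 + b3)); intros k Hk Hkpos.
split; [split|split].
- intros i j Hi Hj.
  destruct i as [|[|[|i]]]; [| | |lia]; destruct j as [|[|[|j]]]; try lia; simpl;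
    clear - Hb Hk; nsatz.
- unfold det3; simpl; clear - Hb Hk; nsatz.
- unfold mulv3, row3, e3p; simpl; f_equal; ring.
- intros [x y z]. unfold sqdist3, dot3, sub3, mulv3, row3; simpl.
  (* [|p - Q p|^2 = 2 (1 - cos t) (|p|^2 - (p.n)^2)] for the unit axis
     [n = (-b2, b1, 0) / sqrt (1 - b3^2)], and [2 (1 - b3) / (1 - b3^2) = 2 k]. *)
  assert (E : (x - ((1 - b1*b1*k) * x + - (b1*b2*k) * y + b1 * z))
              * (x - ((1 - b1*b1*k) * x + - (b1*b2*k) * y + b1 * z))
            + (y - (- (b1*b2*k) * x + (1 - b2*b2*k) * y + b2 * z))
              * (y - (- (b1*b2*k) * x + (1 - b2*b2*k) * y + b2 * z))
            + (z - (- b1 * x + - b2 * y + b3 * z)) * (z - (- b1 * x + - b2 * y + b3 * z))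
            = 2 * (1 - b3) * (x*x + y*y + z*z) - 2 * k * ((b1*y - b2*x) * (b1*y - b2*x)))
    by (clear - Hb Hk; nsatz).
  rewrite E. assert (0 <= k * ((b1*y - b2*x) * (b1*y - b2*x))).
  { apply Rmult_le_pos; [lra | apply Rle_0_sqr]. }
  lra.
Qed.

Lemma pole_rotation b : dot3 b b = 1 ->
  exists Q, SO3 Q /\ mulv3 Q e3p = b /\
    forall p, norm3 (sub3 p (mulv3 Q p)) <= acos (c3 b) * norm3 p.
Proof.
intros Hb.
assert (Hb3 : -1 <= c3 b <= 1) by (destruct b as [b1 b2 b3]; unfold dot3 in Hb; simpl in *; nra).
assert (Hchord : exists Q, SO3 Q /\ mulv3 Q e3p = b /\
          forall p, sqdist3 p (mulv3 Q p) <= 2 * (1 - c3 b) * dot3 p p).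
{ destruct (Req_dec (c3 b) (-1)) as [Hpole|Hpole].
  - destruct flip1_spec as (HF & HFe & HFd). exists flip1.
    replace b with e3neg.
    + split; [|split]; [assumption|assumption|]. intros p. simpl. specialize (HFd p). lra.
    + destruct b as [b1 b2 b3]; unfold dot3, e3neg in *; simpl in *. f_equal; nra.
  - exists (rodrigues b). now apply rodrigues_spec. }
destruct Hchord as (Q & HQ & HQe & HQd). exists Q. split; [|split]; [assumption|assumption|].
intros p. unfold norm3. apply sqrt_le_mult; [|apply acos_bound|apply dot3_self_ge0].
eapply Rle_trans; [apply HQd|]. apply Rmult_le_compat_r; [apply dot3_self_ge0|].
rewrite <- (cos_acos (c3 b)) at 1 by lra. apply one_minus_cos_le, acos_bound.
Qed.

Lemma pole_preimage_height M1 M2 u v : SO3 M1 -> SO3 M2 ->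
  mulv3 M1 u = e3neg -> mulv3 M2 v = e3neg ->
  c3 (mulv3 M1 (mulv3 (tr3 M2) e3p)) = dot3 u v.
Proof.
intros HM1 HM2 Hu Hv.
assert (Hv' : mulv3 (tr3 M2) e3p = scal3 (-1) v).
{ rewrite <- (SO3_trK M2 v HM2), Hv. unfold mulv3, row3, scal3, e3p, e3neg; simpl; f_equal; ring. }
rewrite Hv', <- (SO3_orthogonal M1 HM1 u v), Hu.
unfold mulv3, row3, scal3, dot3, e3neg; simpl; ring.
Qed.

Lemma relative_pole_rotation M1 M2 u v : SO3 M1 -> SO3 M2 ->
  mulv3 M1 u = e3neg -> mulv3 M2 v = e3neg ->
  exists Q, SO3 Q /\ mulv3 (mul3 (tr3 Q) (mul3 M1 (tr3 M2))) e3p = e3p /\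
    forall p, norm3 (sub3 p (mulv3 Q p)) <= angle3 u v * norm3 p.
Proof.
intros HM1 HM2 Hu Hv.
set (b := mulv3 M1 (mulv3 (tr3 M2) e3p)).
destruct (pole_rotation b) as (Q & HQ & HQe & HQdist).
{ unfold b. rewrite (SO3_orthogonal M1), (SO3_orthogonal_tr M2) by assumption.
  unfold dot3, e3p; simpl; ring. }
exists Q. split; [|split]; [exact HQ | |].
- rewrite !mulv3_mul. fold b. rewrite <- HQe. now apply SO3_trK.
- unfold angle3. rewrite <- (pole_preimage_height M1 M2 u v) by assumption. exact HQdist.
Qed.

(** * Lipschitz functions *)

Definition lipschitz (K : R) (f : R -> R) : Prop :=
  forall a b, Rabs (f a - f b) <= K * Rabs (a - b).

Definition lipschitz3 (K : R) (f : R3 -> R) : Prop :=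
  forall p q, Rabs (f p - f q) <= K * norm3 (sub3 p q).

Lemma lipschitz_continuous K f x : lipschitz K f -> continuous f x.
Proof.
intros Hf. apply continuity_pt_filterlim. intros eps Heps.
pose proof (Rabs_pos K) as HK.
exists (eps / (Rabs K + 1)). split; [apply Rdiv_lt_0_compat; lra|].
intros y [_ Hy]; simpl in *; unfold Rdist in *.
apply Rle_lt_trans with (Rabs K * (eps / (Rabs K + 1))).
- eapply Rle_trans; [apply Hf|]. apply Rle_trans with (Rabs K * Rabs (y - x)).
  + apply Rmult_le_compat_r; [apply Rabs_pos | apply RRle_abs].
  + apply Rmult_le_compat_l; lra.
- apply Rmult_lt_reg_r with (Rabs K + 1); [lra|].
  replace (Rabs K * (eps / (Rabs K + 1)) * (Rabs K + 1)) with (Rabs K * eps) by (field; lra).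
  nra.
Qed.

Lemma lipschitz_sqr K N f : lipschitz K f -> (forall t, Rabs (f t) <= N) ->
  lipschitz (2 * N * K) (fun t => f t ^ 2).
Proof.
intros Hf HN a b. replace (f a ^ 2 - f b ^ 2) with ((f a + f b) * (f a - f b)) by ring.
rewrite Rabs_mult, Rmult_assoc. apply Rmult_le_compat; try apply Rabs_pos; [|apply Hf].
eapply Rle_trans; [apply Rabs_triang|]. pose proof (HN a); pose proof (HN b); lra.
Qed.

Lemma lipschitz3_line_x K f y z : lipschitz3 K f -> lipschitz K (fun x => f (mkR3 x y z)).
Proof. intros Hf a b. rewrite <- (norm3_sub_x a b y z). apply Hf. Qed.

Lemma lipschitz3_line_y K f x z : lipschitz3 K f -> lipschitz K (fun y => f (mkR3 x y z)).
Proof. intros Hf a b. rewrite <- (norm3_sub_y a b x z). apply Hf. Qed.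

Lemma lipschitz3_line_z K f x y : lipschitz3 K f -> lipschitz K (fun z => f (mkR3 x y z)).
Proof. intros Hf a b. rewrite <- (norm3_sub_z a b x y). apply Hf. Qed.

Lemma has_gradient_along_line h a d t g :
  has_gradient h (add3 a (scal3 t d)) g ->
  derivable_pt_lim (fun s => h (add3 a (scal3 s d))) t (dot3 g d).
Proof.
intros Hg eps Heps.
set (n := norm3 d). assert (Hn : 0 <= n) by apply sqrt_pos.
destruct (Hg (eps / (2 * (n + 1)))) as (delta & Hdelta & Hh).
{ apply Rdiv_lt_0_compat; lra. }
assert (Hdelta' : 0 < delta / (n + 1)) by (apply Rdiv_lt_0_compat; lra).
exists (mkposreal _ Hdelta'); simpl; intros s Hs0 Hs.
assert (Hsabs : 0 < Rabs s) by now apply Rabs_pos_lt.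
replace (add3 a (scal3 (t + s) d)) with (add3 (add3 a (scal3 t d)) (scal3 s d))
  by (unfold add3, scal3; simpl; f_equal; ring).
assert (Hsd : norm3 (scal3 s d) < delta).
{ rewrite norm3_scal; fold n. apply Rle_lt_trans with (Rabs s * (n + 1)).
  { apply Rmult_le_compat_l; [apply Rabs_pos | lra]. }
  apply Rmult_lt_reg_r with (/ (n + 1)); [apply Rinv_0_lt_compat; lra|].
  rewrite Rmult_assoc, Rinv_r by lra. unfold Rdiv in Hs. lra. }
specialize (Hh _ Hsd). rewrite dot3_scal, norm3_scal in Hh. fold n in Hh.
set (r := h (add3 (add3 a (scal3 t d)) (scal3 s d)) - h (add3 a (scal3 t d))) in *.
replace (r / s - dot3 g d) with ((r - s * dot3 g d) / s) by (field; lra).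
unfold Rdiv. rewrite Rabs_mult, Rabs_inv.
apply Rmult_lt_reg_r with (Rabs s); [lra|]. rewrite Rmult_assoc, Rinv_l, Rmult_1_r by lra.
apply Rle_lt_trans with (eps / (2 * (n + 1)) * (Rabs s * n)); [exact Hh|].
replace (eps / (2 * (n + 1)) * (Rabs s * n)) with (eps * Rabs s * (n / (2 * (n + 1))))
  by (field; lra).
assert (n / (2 * (n + 1)) < 1).
{ apply Rmult_lt_reg_r with (2 * (n + 1)); [lra|]. unfold Rdiv.
  rewrite Rmult_assoc, Rinv_l by lra. lra. }
assert (0 < eps * Rabs s) by nra. nra.
Qed.

Lemma lipschitz3_of_gradient_bound h B :
  (forall p, exists g, has_gradient h p g) ->
  (forall p g, has_gradient h p g -> norm3 g <= B) -> lipschitz3 B h.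
Proof.
intros Hex HB a b.
destruct (functional_choice _ Hex) as [G HG].
set (d := sub3 b a).
set (line := fun s => add3 a (scal3 s d)).
destruct (MVT_cor2 (fun s => h (line s)) (fun s => dot3 (G (line s)) d) 0 1 Rlt_0_1
            (fun s _ => has_gradient_along_line h a d s _ (HG (line s)))) as (c & Hc & _).
replace (line 1) with b in Hc
  by (unfold line, d, add3, scal3, sub3; destruct a, b; simpl; f_equal; ring).
replace (line 0) with a in Hc
  by (unfold line, d, add3, scal3, sub3; destruct a, b; simpl; f_equal; ring).
rewrite Rabs_minus_sym, Hc, Rminus_0_r, Rmult_1_r, norm3_sub_sym.
eapply Rle_trans; [apply abs_dot3_le|].
apply Rmult_le_compat_r; [apply sqrt_pos | apply HB with (line c), HG].
Qed.

(** * Integrals over the real line *)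

Lemma ex_RInt_of_continuous (f : R -> R) a b : (forall x, continuous f x) -> ex_RInt f a b.
Proof. intros Hf. apply (@ex_RInt_continuous R_CompleteNormedModule). auto. Qed.

Lemma RInt_zero (f : R -> R) a b : a <= b -> (forall x, a < x < b -> f x = 0) -> RInt f a b = 0.
Proof.
intros Hab Hf. rewrite (RInt_ext f (fun _ => 0)), RInt_const.
- unfold scal; simpl; unfold mult; simpl; ring.
- intros x Hx. rewrite Rmin_left, Rmax_right in Hx by lra. auto.
Qed.

Lemma int_R_supported (f : R -> R) K : 0 <= K -> (forall x, continuous f x) ->
  (forall x, K < Rabs x -> f x = 0) -> int_R f = RInt f (-K) K.
Proof.
intros HK Hc Hz. unfold int_R. apply (is_RInt_gen_unique (V := R_CompleteNormedModule)).
intros P [eps HP].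
apply Filter_prod with (fun a => a < -K) (fun b => K < b); [now exists (-K) | now exists K|].
intros a b Ha Hb. simpl. exists (RInt f a b).
split; [apply RInt_correct, ex_RInt_of_continuous, Hc|].
apply HP. replace (RInt f a b) with (RInt f (-K) K); [apply ball_center|].
assert (Hex : forall a b, ex_RInt f a b) by (intros; now apply ex_RInt_of_continuous).
rewrite <- (RInt_Chasles f a (-K) b), <- (RInt_Chasles f (-K) K b) by apply Hex.
rewrite (RInt_zero f a (-K)), (RInt_zero f K b); try lra.
- unfold plus; cbn; ring.
- intros x Hx. apply Hz. rewrite Rabs_pos_eq; lra.
- intros x Hx. apply Hz. rewrite Rabs_left; lra.
Qed.

Lemma int_R_zero (f : R -> R) : (forall x, f x = 0) -> int_R f = 0.
Proof.
intros Hf. rewrite (int_R_supported f 0); try lra; auto.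
- rewrite Ropp_0. exact (RInt_point (V := R_CompleteNormedModule) 0 f).
- intros x. rewrite (functional_extensionality f (fun _ => 0) Hf). apply continuous_const.
Qed.

Lemma abs_int_R_le (f : R -> R) s M : 0 <= s -> (forall x, continuous f x) ->
  (forall x, s < Rabs x -> f x = 0) -> (forall x, Rabs (f x) <= M) ->
  Rabs (int_R f) <= 2 * s * M.
Proof.
intros Hs Hc Hz HM. rewrite (int_R_supported f s) by assumption.
replace (2 * s * M) with ((s - - s) * M) by ring.
apply abs_RInt_le_const; [lra | now apply ex_RInt_of_continuous | auto].
Qed.

Lemma int_R_minus (f g : R -> R) : (forall x, continuous f x) -> (forall x, continuous g x) ->
  (forall x, 1 < Rabs x -> f x = 0) -> (forall x, 1 < Rabs x -> g x = 0) ->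
  int_R f - int_R g = int_R (fun x => f x - g x).
Proof.
intros Hf Hg Hf0 Hg0.
rewrite !(int_R_supported _ 1); auto; try lra.
- symmetry. apply (RInt_minus (V := R_CompleteNormedModule)); now apply ex_RInt_of_continuous.
- intros x. apply (continuous_minus f g); auto.
- intros x Hx. rewrite Hf0, Hg0 by assumption. ring.
Qed.

Lemma int_R_lipschitz_param (f : R -> R -> R) K :
  (forall a x, continuous (f a) x) -> (forall a x, 1 < Rabs x -> f a x = 0) ->
  (forall x, lipschitz K (fun a => f a x)) -> lipschitz (2 * K) (fun a => int_R (f a)).
Proof.
intros Hc Hz Hlip a b. rewrite int_R_minus by auto.
replace (2 * K * Rabs (a - b)) with (2 * 1 * (K * Rabs (a - b))) by ring.
apply abs_int_R_le; [lra | | | intros x; apply Hlip].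
- intros x. apply (continuous_minus (f a) (f b)); auto.
- intros x Hx. rewrite !Hz by assumption. ring.
Qed.

Lemma RInt_parabola c : RInt (fun x => c * (1 - x * x)) (-1) 1 = 4 / 3 * c.
Proof.
apply is_RInt_unique.
replace (4 / 3 * c) with (minus (c * (1 - 1 * 1 * 1 / 3)) (c * (-1 - (-1) * (-1) * (-1) / 3)))
  by (unfold minus, plus, opp; simpl; field).
apply (is_RInt_derive (fun x => c * (x - x * x * x / 3))).
- intros x _. auto_derive; [auto | field].
- intros x _. apply (ex_derive_continuous (fun x => c * (1 - x * x))). auto_derive. auto.
Qed.

Lemma int_R_le_parabola (f : R -> R) c : (forall x, continuous f x) ->
  (forall x, 1 < Rabs x -> f x = 0) -> (forall x, Rabs x <= 1 -> f x <= c * (1 - x * x)) ->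
  int_R f <= 4 / 3 * c.
Proof.
intros Hc Hz Hle. rewrite (int_R_supported f 1), <- RInt_parabola by (auto; lra).
apply RInt_le; [lra | now apply ex_RInt_of_continuous | |].
- apply ex_RInt_of_continuous. intros x.
  apply (ex_derive_continuous (fun x => c * (1 - x * x))). auto_derive. auto.
- intros x Hx. apply Hle. apply Rabs_le. lra.
Qed.

(** * Projections along the third axis *)

Definition supported_in_ball (f : R3 -> R) : Prop := forall p, 1 < norm3 p -> f p = 0.

Definition zproj (f : R3 -> R) : R -> R -> R := fun x y => int_R (fun z => f (mkR3 x y z)).

Section ZProjection.

Variables (d : R3 -> R) (K L : R).
Hypothesis d_lip : lipschitz3 K d.
Hypothesis d_supp : supported_in_ball d.
Hypothesis d_bound : forall p, Rabs (d p) <= L.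

Lemma zline_continuous x y z : continuous (fun z => d (mkR3 x y z)) z.
Proof. exact (lipschitz_continuous _ _ z (lipschitz3_line_z K d x y d_lip)). Qed.

Lemma zline_vanishes x y s z : 0 <= s -> 1 - x * x - y * y <= s * s -> s < Rabs z ->
  d (mkR3 x y z) = 0.
Proof.
intros Hs Hxy Hz. apply d_supp, norm3_gt1.
assert (s² < z²) by (apply Rsqr_lt_abs_1; rewrite Rabs_pos_eq; lra).
unfold Rsqr in *; lra.
Qed.

Lemma abs_zproj_le x y s : 0 <= s -> 1 - x * x - y * y <= s * s ->
  Rabs (zproj d x y) <= 2 * s * L.
Proof.
intros Hs Hxy. apply abs_int_R_le; [exact Hs | apply zline_continuous | | auto].
intros z. now apply zline_vanishes.
Qed.

Lemma abs_zproj_le_2L x y : Rabs (zproj d x y) <= 2 * L.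
Proof.
rewrite <- (Rmult_1_r 2) at 1. apply abs_zproj_le; [lra|].
pose proof (Rle_0_sqr x); pose proof (Rle_0_sqr y); unfold Rsqr in *; lra.
Qed.

Lemma zproj_outside_disk x y : 1 < x * x + y * y -> zproj d x y = 0.
Proof.
intros Hxy. apply Rabs_eq_0, Rle_antisym; [|apply Rabs_pos].
replace 0 with (2 * 0 * L) by ring. apply abs_zproj_le; lra.
Qed.

(* The line over [(x, y)] meets the unit ball in a chord of length
   [2 sqrt (1 - x^2 - y^2) <= 2 sqrt ((1 - x^2) (1 - y^2))]. *)
Lemma zproj_sqr_le x y : Rabs x <= 1 -> Rabs y <= 1 ->
  zproj d x y ^ 2 <= 4 * (L * L) * (1 - x * x) * (1 - y * y).
Proof.
intros Hx Hy.
assert (HL : 0 <= L) by (eapply Rle_trans; [apply Rabs_pos | apply (d_bound e3p)]).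
pose proof (sqr_le_1 x Hx); pose proof (sqr_le_1 y Hy).
set (m := Rmax 0 (1 - x * x - y * y)).
assert (Hm : 0 <= m <= (1 - x * x) * (1 - y * y)).
{ unfold m, Rmax. destruct (Rle_dec 0 (1 - x * x - y * y)); split; nra. }
assert (Hs : sqrt m * sqrt m = m) by (apply sqrt_sqrt; lra).
assert (HP : Rabs (zproj d x y) <= 2 * sqrt m * L).
{ apply abs_zproj_le; [apply sqrt_pos | rewrite Hs; apply Rmax_r]. }
rewrite <- pow2_abs. pose proof (Rabs_pos (zproj d x y)).
apply Rle_trans with ((2 * sqrt m * L) ^ 2).
- apply pow_incr. lra.
- replace ((2 * sqrt m * L) ^ 2) with (4 * (L * L) * (sqrt m * sqrt m)) by ring.
  rewrite Hs, (Rmult_assoc _ (1 - x * x)). apply Rmult_le_compat_l; [nra | lra].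
Qed.

Lemma zproj_lipschitz_x y : lipschitz (2 * K) (fun x => zproj d x y).
Proof.
apply (int_R_lipschitz_param (fun x z => d (mkR3 x y z))).
- intros x z. apply zline_continuous.
- intros x z. apply (zline_vanishes x y 1); [lra | nra].
- intros z. now apply lipschitz3_line_x.
Qed.

Lemma zproj_lipschitz_y x : lipschitz (2 * K) (fun y => zproj d x y).
Proof.
apply (int_R_lipschitz_param (fun y z => d (mkR3 x y z))).
- intros y z. apply zline_continuous.
- intros y z. apply (zline_vanishes x y 1); [lra | nra].
- intros z. now apply lipschitz3_line_y.
Qed.

Lemma zproj_sqr_lipschitz_x y : lipschitz (2 * (2 * L) * (2 * K)) (fun x => zproj d x y ^ 2).
Proof. apply lipschitz_sqr; [apply zproj_lipschitz_x | intros; apply abs_zproj_le_2L]. Qed.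

Lemma zproj_sqr_continuous_y x y : continuous (fun y => zproj d x y ^ 2) y.
Proof.
apply (lipschitz_continuous (2 * (2 * L) * (2 * K))), lipschitz_sqr;
  [apply zproj_lipschitz_y | intros; apply abs_zproj_le_2L].
Qed.

Lemma zproj_sqr_vanishes_y x y : 1 < Rabs y -> zproj d x y ^ 2 = 0.
Proof.
intros Hy. rewrite zproj_outside_disk; [ring|].
pose proof (sqr_gt_1 y Hy); pose proof (Rle_0_sqr x); unfold Rsqr in *; lra.
Qed.

Lemma int_zproj_sqr_le x : Rabs x <= 1 ->
  int_R (fun y => zproj d x y ^ 2) <= 4 / 3 * (4 * (L * L) * (1 - x * x)).
Proof.
intros Hx. apply int_R_le_parabola;
  [apply zproj_sqr_continuous_y | apply zproj_sqr_vanishes_y | intros y Hy].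
now apply zproj_sqr_le.
Qed.

Lemma int_int_zproj_sqr_le :
  int_R (fun x => int_R (fun y => zproj d x y ^ 2)) <= 64 / 9 * (L * L).
Proof.
replace (64 / 9 * (L * L)) with (4 / 3 * (16 / 3 * (L * L))) by field.
apply int_R_le_parabola.
- intros x. apply (lipschitz_continuous (2 * (2 * (2 * L) * (2 * K)))).
  apply (int_R_lipschitz_param (fun x y => zproj d x y ^ 2));
    [apply zproj_sqr_continuous_y | apply zproj_sqr_vanishes_y | apply zproj_sqr_lipschitz_x].
- intros x Hx. apply int_R_zero. intros y. rewrite zproj_outside_disk; [ring|].
  pose proof (sqr_gt_1 x Hx); pose proof (Rle_0_sqr y); unfold Rsqr in *; lra.
- intros x Hx. eapply Rle_trans; [now apply int_zproj_sqr_le | right; field].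
Qed.

Lemma L2norm2_zproj_le : L2norm2 (zproj d) <= 2 * sqrt PI * L.
Proof.
assert (HL : 0 <= L) by (eapply Rle_trans; [apply Rabs_pos | apply (d_bound e3p)]).
unfold L2norm2. rewrite (Rmult_comm _ L), <- Rmult_assoc.
apply sqrt_le_mult; [| lra | pose proof PI_RGT_0; lra].
eapply Rle_trans; [apply int_int_zproj_sqr_le|].
pose proof PI2_3_2. nra.
Qed.

End ZProjection.

Lemma zproj_sub f1 f2 K x y : lipschitz3 K f1 -> lipschitz3 K f2 ->
  supported_in_ball f1 -> supported_in_ball f2 ->
  zproj f1 x y - zproj f2 x y = zproj (fun p => f1 p - f2 p) x y.
Proof.
intros Hl1 Hl2 Hs1 Hs2. unfold zproj.
assert (Hvan : forall f, supported_in_ball f -> forall z, 1 < Rabs z -> f (mkR3 x y z) = 0).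
{ intros f Hf z Hz. apply Hf, norm3_gt1.
  pose proof (sqr_gt_1 z Hz); pose proof (Rle_0_sqr x); pose proof (Rle_0_sqr y).
  unfold Rsqr in *; lra. }
apply int_R_minus; auto; intros z;
  eapply lipschitz_continuous, lipschitz3_line_z; eassumption.
Qed.

Lemma L2norm2_zproj_sub_le f1 f2 K L : lipschitz3 K f1 -> lipschitz3 K f2 ->
  supported_in_ball f1 -> supported_in_ball f2 ->
  (forall p, norm3 p <= 1 -> Rabs (f1 p - f2 p) <= L) ->
  L2norm2 (fun x y => zproj f1 x y - zproj f2 x y) <= 2 * sqrt PI * L.
Proof.
intros Hl1 Hl2 Hs1 Hs2 HL.
assert (HL0 : 0 <= L).
{ eapply Rle_trans; [apply Rabs_pos | apply (HL (mkR3 0 0 0))].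
  unfold norm3, dot3; simpl. rewrite !Rmult_0_l, !Rplus_0_l, sqrt_0. lra. }
replace (fun x y => zproj f1 x y - zproj f2 x y) with (zproj (fun p => f1 p - f2 p))
  by (do 2 (apply functional_extensionality; intro); symmetry; now apply (zproj_sub f1 f2 K)).
apply (L2norm2_zproj_le _ (2 * K)).
- intros p q.
  replace (f1 p - f2 p - (f1 q - f2 q)) with ((f1 p - f1 q) - (f2 p - f2 q)) by ring.
  eapply Rle_trans; [apply Rabs_triang|]. rewrite Rabs_Ropp.
  pose proof (Hl1 p q); pose proof (Hl2 p q); lra.
- intros p Hp. rewrite Hs1, Hs2 by assumption. ring.
- intros p. destruct (Rle_lt_dec (norm3 p) 1) as [Hp|Hp]; [now apply HL|].
  rewrite Hs1, Hs2, Rminus_0_r, Rabs_R0 by assumption. exact HL0.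
Qed.

Lemma rotate3_mul A B f : rotate3 A (rotate3 B f) = rotate3 (mul3 A B) f.
Proof.
apply functional_extensionality. intros p. unfold rotate3. f_equal.
destruct p; unfold mulv3, row3, tr3, mul3; simpl; f_equal; ring.
Qed.

Lemma rotate3K M f : SO3 M -> rotate3 (tr3 M) (rotate3 M f) = f.
Proof.
intros HM. apply functional_extensionality. intros p. unfold rotate3. f_equal. now apply SO3_trK.
Qed.

Lemma lipschitz3_rotate3 M K f : SO3 M -> lipschitz3 K f -> lipschitz3 K (rotate3 M f).
Proof.
intros HM Hf p q. unfold rotate3. eapply Rle_trans; [apply Hf|].
rewrite <- mulv3_sub, norm3_orthogonal by now apply SO3_orthogonal_tr. lra.
Qed.

Lemma supported_rotate3 M f : SO3 M -> supported_in_ball f -> supported_in_ball (rotate3 M f).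
Proof.
intros HM Hf p Hp. apply Hf. now rewrite norm3_orthogonal by now apply SO3_orthogonal_tr.
Qed.

Lemma act2_zproj T f : SO3 T -> mulv3 T e3p = e3p -> act2 T (zproj f) = zproj (rotate3 T f).
Proof.
intros HT HTe. destruct (SO3_fix_e3p_entries T HT HTe) as (E02 & E12 & E22 & E20 & E21).
do 2 (apply functional_extensionality; intro). unfold act2, zproj, rotate3.
f_equal. apply functional_extensionality. intro z. f_equal.
unfold mulv3, row3, tr3; simpl. rewrite E02, E12, E22, E20, E21. f_equal; ring.
Qed.

Lemma L2R_le_L2norm2 I1 I2 g : SO2 g ->
  Rbar_le (L2R I1 I2) (L2norm2 (fun x y => I1 x y - act2 g I2 x y)).
Proof. intros Hg. apply (proj1 (Glb_Rbar_correct _)). now exists g. Qed.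

Theorem proposition2 (rho : R3 -> R) (B : R) (u v : R3) (M1 M2 : mat3) :
  prob_density rho ->
  (forall p, exists g, has_gradient rho p g) ->
  (forall p, 1 < norm3 p -> rho p = 0) ->
  is_lub_Rbar (fun r => exists p g, has_gradient rho p g /\ r = norm3 g) B ->
  norm3 u = 1 -> norm3 v = 1 ->
  SO3 M1 -> mulv3 M1 u = e3neg ->
  SO3 M2 -> mulv3 M2 v = e3neg ->
  Rbar_le (L2R (projection M1 rho) (projection M2 rho))
          (Finite (2 * sqrt PI * B * angle3 u v)).
Proof.
intros _ Hgrad Hsupp [Hub _] _ _ HM1 Hu HM2 Hv.
assert (HB : forall p g, has_gradient rho p g -> norm3 g <= B).
{ intros p g Hg. apply Hub. eauto. }
assert (HB0 : 0 <= B).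
{ destruct (Hgrad e3p) as [g Hg]. eapply Rle_trans; [apply sqrt_pos | exact (HB _ _ Hg)]. }
assert (Hlip : lipschitz3 B (rotate3 M1 rho))
  by now apply lipschitz3_rotate3, lipschitz3_of_gradient_bound.
destruct (relative_pole_rotation M1 M2 u v) as (Q & HQ & HTe & HQdist); try assumption.
set (T := mul3 (tr3 Q) (mul3 M1 (tr3 M2))) in HTe.
assert (HT : SO3 T) by (apply SO3_mul; [|apply SO3_mul]; auto using SO3_tr).
eapply Rbar_le_trans; [apply (L2R_le_L2norm2 _ _ T), SO3_fix_e3p_SO2; assumption|].
change (projection ?M rho) with (zproj (rotate3 M rho)).
rewrite act2_zproj by assumption. unfold T. rewrite <- !rotate3_mul, rotate3K by assumption.
simpl. rewrite (Rmult_assoc _ B).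
apply (L2norm2_zproj_sub_le _ _ B); auto using lipschitz3_rotate3, supported_rotate3, SO3_tr.
intros p Hp. change (rotate3 (tr3 Q) ?h p) with (h (mulv3 Q p)).
eapply Rle_trans; [apply Hlip|]. apply Rmult_le_compat_l; [exact HB0|].
eapply Rle_trans; [apply HQdist|]. rewrite <- (Rmult_1_r (angle3 u v)) at 2.
apply Rmult_le_compat_l; [apply acos_bound | exact Hp].
Qed.
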